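(* Let $U$ be a proper graded submodule of $M$. Then $U$ is a graded weakly $J_{gr}$-semiprime submodule of $M$ if and only if for every graded submodule $K$ of $M$, every $r_g\in h(R)$ and every $n\in\mathbb{Z}^+$ with $\{0\}\neq\langle r_g\rangle^nK\subseteq U$, we have $\langle r_g\rangle K\subseteq U+J_{gr}(M)$.
   Context: Standing conventions: $\Gamma$ is a group, $R=\bigoplus_{g\in\Gamma}R_g$ is a commutative $\Gamma$-graded ring with identity, and $M=\bigoplus_{g\in\Gamma}M_g$ is a unitary $\Gamma$-graded $R$-module. $h(R)=\bigcup_gR_g$, $h(M)=\bigcup_gM_g$ are the homogeneous elements; $r_g$, $m_h$ denote homogeneous elements. A submodule $U$ is graded if $U=\bigoplus_g(U\cap M_g)$. A graded submodule $U\neq M$ is Gr-maximal if every graded submodule $L$ with $U\subseteq L\subseteq M$ equals $U$ or $M$. $J_{gr}(M)$ is the intersection of all Gr-maximal submodules of $M$ ($=M$ if there are none). A proper graded submodule $U$ of $M$ is graded weakly $J_{gr}$-semiprime if whenever $r_g\in h(R)$, $m_h\in h(M)$, $n\in\mathbb{Z}^+$ and $0\neq r_g^nm_h\in U$, then $r_gm_h\in U+J_{gr}(M)$. $\langle a\rangle$ is the ideal generated by $a$. *)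

From HB Require Import structures.
From mathcomp Require Import all_boot all_order all_algebra.
From mathcomp Require Import monoid.
Set Implicit Arguments. Unset Strict Implicit. Unset Printing Implicit Defensive.
Import GRing.Theory.
Local Open Scope ring_scope.

Definition submodule (R : pzRingType) (M : lmodType R) (U : M -> Prop) : Prop :=
  [/\ U 0, (forall x y, U x -> U y -> U (x + y)) &
      (forall (r : R) x, U x -> U (r *: x))].

Definition span (R : pzRingType) (M : lmodType R) (S : M -> Prop) : M -> Prop :=
  fun x => forall L : M -> Prop, submodule L -> (forall y, S y -> L y) -> L x.

(** Ideals of a commutative ring R = submodules of R over itself. *)
Definition pideal (R : comPzRingType) (a : R) : R^o -> Prop :=
  span (fun x : R^o => x = a).

Definition ideal_mul (R : comPzRingType) (I J : R^o -> Prop) : R^o -> Prop :=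
  span (fun x : R^o => exists a b, [/\ I a, J b & x = a * b]).

Fixpoint ideal_pow (R : comPzRingType) (I : R^o -> Prop) (n : nat) : R^o -> Prop :=
  match n with
  | 0%N => fun _ => True
  | n'.+1 => ideal_mul (ideal_pow I n') I
  end.

Definition ideal_smul (R : comPzRingType) (M : lmodType R)
  (I : R^o -> Prop) (K : M -> Prop) : M -> Prop :=
  span (fun x : M => exists a k, [/\ I a, K k & x = a *: k]).

Definition subsum (R : pzRingType) (M : lmodType R) (U V : M -> Prop) : M -> Prop :=
  fun x => exists u v, [/\ U u, V v & x = u + v].

Definition internal_direct_sum (G : eqType) (V : zmodType) (VG : G -> V -> Prop) : Prop :=
  [/\ (forall g, VG g 0 /\ forall x y, VG g x -> VG g y -> VG g (x - y)),
      (forall x : V, exists (s : seq G) (f : G -> V),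
          [/\ uniq s, (forall g, g \in s -> VG g (f g)) & x = \sum_(g <- s) f g]) &
      (forall (s : seq G) (f : G -> V), uniq s -> (forall g, g \in s -> VG g (f g)) ->
          \sum_(g <- s) f g = 0 -> forall g, g \in s -> f g = 0)].

Definition graded_ring (G : groupType) (R : comPzRingType) (RG : G -> R -> Prop) : Prop :=
  internal_direct_sum RG /\
  (forall g h (a b : R), RG g a -> RG h b -> RG (g * h)%g (a * b)).

Definition graded_module (G : groupType) (R : comPzRingType) (M : lmodType R)
  (RG : G -> R -> Prop) (MG : G -> M -> Prop) : Prop :=
  internal_direct_sum MG /\
  (forall g h (a : R) (m : M), RG g a -> MG h m -> MG (g * h)%g (a *: m)).

Definition homogeneous (G : Type) (V : Type) (VG : G -> V -> Prop) (x : V) : Prop :=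
  exists g, VG g x.

(** Graded submodule: U is a submodule and U = (+)_g (U /\ M_g), i.e. every
    element of U is a finite sum of homogeneous elements of U of distinct degrees. *)
Definition graded_submodule (G : groupType) (R : comPzRingType) (M : lmodType R)
  (MG : G -> M -> Prop) (U : M -> Prop) : Prop :=
  submodule U /\
  forall u, U u -> exists (s : seq G) (f : G -> M),
    [/\ uniq s, (forall g, g \in s -> MG g (f g) /\ U (f g)) & u = \sum_(g <- s) f g].

Definition proper_submod (M : Type) (U : M -> Prop) : Prop := exists x, ~ U x.

Definition gr_maximal (G : groupType) (R : comPzRingType) (M : lmodType R)
  (MG : G -> M -> Prop) (U : M -> Prop) : Prop :=
  [/\ graded_submodule MG U, proper_submod U &
      forall L, graded_submodule MG L -> (forall x, U x -> L x) ->
        (forall x, L x <-> U x) \/ (forall x, L x)].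

(** J_gr(M): intersection of all Gr-maximal submodules (= M if there are none). *)
Definition Jgr (G : groupType) (R : comPzRingType) (M : lmodType R)
  (MG : G -> M -> Prop) : M -> Prop :=
  fun x => forall L, gr_maximal MG L -> L x.

Definition gr_weakly_Jgr_semiprime (G : groupType) (R : comPzRingType) (M : lmodType R)
  (RG : G -> R -> Prop) (MG : G -> M -> Prop) (U : M -> Prop) : Prop :=
  [/\ graded_submodule MG U, proper_submod U &
      forall (r : R) (m : M) (n : nat), homogeneous RG r -> homogeneous MG m ->
        (0 < n)%N -> r ^+ n *: m != 0 -> U (r ^+ n *: m) ->
        subsum U (Jgr MG) (r *: m)].

From Pilot Require Import Defs.
From HB Require Import structures.
From mathcomp Require Import all_boot all_order all_algebra.
From mathcomp Require Import monoid.
Set Implicit Arguments. Unset Strict Implicit. Unset Printing Implicit Defensive.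
Import GRing.Theory.
Local Open Scope ring_scope.

(* The key fact is [Jgr_of_power_annihilated]: if r, m are homogeneous and
   r^n m = 0, then r m lies in J_gr(M).  Indeed, for a Gr-maximal L the graded
   submodule L + R(rm) is either L, so rm is in L, or M, so m = l + c r m with
   l in L; iterating this gives m = l' + c' r^n m = l', hence m and rm are in L.
   - (=>) Elements of <r>K are combinations of r k with k in K; splitting k
     into homogeneous components k_g in K, each r k_g is in U + J_gr(M): by the
     key fact if r^n k_g = 0, by weak semiprimeness otherwise, since
     r^n k_g is in <r>^n K, which is contained in U.
   - (<=) Apply the hypothesis to the graded cyclic submodule K = Rm. *)

Section Submodules.
Variables (R : pzRingType) (M : lmodType R).
Implicit Types (U V L S : M -> Prop).

Lemma submod0 U : submodule U -> U 0.
Proof. by case. Qed.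

Lemma submodD U x y : submodule U -> U x -> U y -> U (x + y).
Proof. by case=> _ HD _; apply: HD. Qed.

Lemma submodZ U c x : submodule U -> U x -> U (c *: x).
Proof. by case=> _ _ HZ; apply: HZ. Qed.

Lemma submod_sum U (I : eqType) (s : seq I) (F : I -> M) :
  submodule U -> (forall i, i \in s -> U (F i)) -> U (\sum_(i <- s) F i).
Proof.
move=> HU; elim: s => [|i s IH] HF; first by rewrite big_nil; apply: submod0.
rewrite big_cons; apply: submodD => //; first by apply: HF; rewrite mem_head.
by apply: IH => j Hj; apply: HF; rewrite inE Hj orbT.
Qed.

Lemma span_least S L x : submodule L -> (forall y, S y -> L y) -> Defs.span S x -> L x.
Proof. by move=> HL HS Hx; apply: Hx. Qed.

Lemma span_gen S x : S x -> Defs.span S x.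
Proof. by move=> Sx L _ HS; apply: HS. Qed.

Lemma subsum_submod U V : submodule U -> submodule V -> submodule (subsum U V).
Proof.
move=> HU HV; split.
- by exists 0, 0; split; rewrite ?addr0 //; apply: submod0.
- move=> _ _ [u1 [v1 [Hu1 Hv1 ->]]] [u2 [v2 [Hu2 Hv2 ->]]].
  exists (u1 + u2), (v1 + v2); rewrite addrACA.
  by split=> //; apply: submodD.
- move=> c _ [u [v [Hu Hv ->]]].
  by exists (c *: u), (c *: v); rewrite scalerDr; split=> //; apply: submodZ.
Qed.

Lemma cap_submod (P : (M -> Prop) -> Prop) :
  (forall L, P L -> submodule L) -> submodule (fun x => forall L, P L -> L x).
Proof.
move=> HP; split.
- by move=> L /HP /submod0.
- by move=> x y Hx Hy L PL; apply: submodD (HP L PL) (Hx L PL) (Hy L PL).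
- by move=> c x Hx L PL; apply: submodZ (HP L PL) (Hx L PL).
Qed.
End Submodules.

Section DirectSum.
Variables (G : eqType) (V : zmodType) (VG : G -> V -> Prop).
Hypothesis HV : internal_direct_sum VG.

Lemma component_sum g (I : eqType) (s : seq I) (F : I -> V) :
  (forall i, i \in s -> VG g (F i)) -> VG g (\sum_(i <- s) F i).
Proof.
have [/(_ g) [H0 HB] _ _] := HV.
have HD x y : VG g x -> VG g y -> VG g (x + y).
  by move=> Hx Hy; rewrite -[y]opprK -[- y]sub0r; apply/HB/HB.
elim: s => [|i s IH] HF; first by rewrite big_nil.
rewrite big_cons; apply: HD; first by apply: HF; rewrite mem_head.
by apply: IH => j Hj; apply: HF; rewrite inE Hj orbT.
Qed.
End DirectSum.

Lemma sum_by_tag (G : eqType) (V : zmodType) (l : seq (G * V)) :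
  \sum_(g <- undup (map fst l)) \sum_(p <- l | p.1 == g) p.2 = \sum_(p <- l) p.2.
Proof.
rewrite (exchange_big_dep predT) //= big_seq [RHS]big_seq.
apply: eq_bigr => p pl.
rewrite big_mkcond (bigD1_seq p.1) ?undup_uniq ?mem_undup ?map_f //= eqxx.
by rewrite big1 ?addr0 // => i; rewrite eq_sym => /negbTE ->.
Qed.

Section Graded.
Variables (G : groupType) (R : comPzRingType) (M : lmodType R)
  (RG : G -> R -> Prop) (MG : G -> M -> Prop).
Hypotheses (HR : graded_ring RG) (HM : graded_module RG MG).

Lemma graded_of_homogeneous_sums (U : M -> Prop) : submodule U ->
  (forall u, U u -> exists l : seq (G * M), u = \sum_(p <- l) p.2 /\
      forall p, p \in l -> MG p.1 p.2 /\ U p.2) -> graded_submodule MG U.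
Proof.
move=> HU Hdec; split => // u /Hdec [l [-> Hl]].
exists (undup (map fst l)), (fun g => \sum_(p <- l | p.1 == g) p.2).
split; [exact: undup_uniq | | by rewrite sum_by_tag].
move=> g _; rewrite -big_filter; split.
- apply: (component_sum (proj1 HM)) => p.
  by rewrite mem_filter => /andP [/eqP <- /Hl []].
- by apply: submod_sum => // p; rewrite mem_filter => /andP [_ /Hl []].
Qed.

Definition add_line (L : M -> Prop) (x : M) : M -> Prop :=
  fun y => exists l c, L l /\ y = l + c *: x.

Lemma add_line_submod L x : submodule L -> submodule (add_line L x).
Proof.
move=> HL; split.
- by exists 0, 0; rewrite scale0r addr0; split => //; apply: submod0.
- move=> _ _ [l1 [c1 [H1 ->]]] [l2 [c2 [H2 ->]]].
  by exists (l1 + l2), (c1 + c2); rewrite scalerDl addrACA; split => //; apply: submodD.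
- move=> r _ [l [c [Hl ->]]].
  by exists (r *: l), (r * c); rewrite scalerDr scalerA; split => //; apply: submodZ.
Qed.

(* L + Rx is graded when L is graded and x is homogeneous: decompose the
   element of L and the scalar into homogeneous pieces. *)
Lemma add_line_graded L x h : graded_submodule MG L -> MG h x ->
  graded_submodule MG (add_line L x).
Proof.
move=> [HL HLdec] Hx.
apply: graded_of_homogeneous_sums; first exact: add_line_submod.
move=> _ [l [c [Hl ->]]].
have [s1 [f1 [_ Hf1 ->]]] := HLdec l Hl.
have [[_ /(_ c) [s2 [f2 [_ Hf2 ->]]] _] _] := HR.
exists (map (fun g => (g, f1 g)) s1 ++ map (fun g => ((g * h)%g, f2 g *: x)) s2).
split; first by rewrite big_cat !big_map scaler_suml.
move=> p; rewrite mem_cat => /orP [] /mapP [g Hg ->] /=.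
- have [Hg1 Hg2] := Hf1 g Hg; split => //.
  by exists (f1 g), 0; rewrite scale0r addr0.
- split; first by apply: (proj2 HM) => //; apply: Hf2.
  by exists 0, (f2 g); rewrite add0r; split => //; apply: submod0.
Qed.

Lemma zero_graded : graded_submodule MG (fun y : M => y = 0).
Proof.
split; first by split=> // [x y -> ->|c x ->]; rewrite ?addr0 ?scaler0.
by move=> u ->; exists [::], (fun _ => 0); rewrite big_nil.
Qed.

Lemma Jgr_submod : submodule (Jgr MG).
Proof. by apply: cap_submod => L [[]]. Qed.

Lemma absorb_power (L : M -> Prop) (r : R) m l0 s : submodule L -> L l0 ->
  m = l0 + s *: (r *: m) -> forall k, add_line L (r ^+ k *: m) m.
Proof.
move=> HL Hl0 Em; elim=> [|k [l [c [Hl E]]]].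
  by exists 0, 1; rewrite expr0 !scale1r add0r; split => //; apply: submod0.
exists (l + (c * r ^+ k) *: l0), (c * s); split.
  by apply: submodD => //; apply: submodZ.
rewrite {1}E {1}Em !scalerDr !scalerA addrA exprSr.
by rewrite -[c * s * _]mulrA [r ^+ k * s]mulrC -mulrA.
Qed.

Lemma Jgr_of_power_annihilated (r : R) (m : M) g h n :
  RG g r -> MG h m -> r ^+ n *: m = 0 -> Jgr MG (r *: m).
Proof.
move=> Hr Hm Hz L [HLg _ Lmax].
have HL := proj1 HLg.
have HLL : forall y, L y -> add_line L (r *: m) y.
  by move=> y Ly; exists y, 0; rewrite scale0r addr0.
have Hrm : MG (g * h)%g (r *: m) by apply: (proj2 HM).
case: (Lmax _ (add_line_graded HLg Hrm) HLL) => [Heq | Hall].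
  by apply/Heq; exists 0, 1; rewrite scale1r add0r; split => //; apply: submod0.
have [l0 [s [Hl0 Em]]] := Hall m.
have [l [c [Hl E]]] := absorb_power HL Hl0 Em n.
by apply: submodZ => //; rewrite E Hz scaler0 addr0.
Qed.
End Graded.

Section Ideals.
Variable R : comPzRingType.

Lemma pideal_mem (r : R) : pideal r r.
Proof. exact: span_gen. Qed.

Lemma multiples_submod (a : R) : submodule (fun b : R^o => exists c, b = c * a).
Proof.
split.
- by exists 0; rewrite mul0r.
- by move=> _ _ [c1 ->] [c2 ->]; exists (c1 + c2); rewrite mulrDl.
- by move=> d _ [c ->]; exists (d * c); exact: mulrA.
Qed.

Lemma pideal_multiple (r a : R) : pideal r a -> exists c, a = c * r.
Proof.
apply: (span_least (L := fun b : R^o => exists c, b = c * r)).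
  exact: multiples_submod.
by move=> _ ->; exists 1; rewrite mul1r.
Qed.

Lemma pideal_pow_mem (r : R) n : ideal_pow (pideal r) n (r ^+ n).
Proof.
elim: n => [|n IH] //=; apply: span_gen.
by exists (r ^+ n), r; split; rewrite ?exprSr //; apply: pideal_mem.
Qed.

Lemma pideal_pow_multiple (r : R) n a :
  ideal_pow (pideal r) n a -> exists c, a = c * r ^+ n.
Proof.
elim: n a => [|n IH] a /=; first by exists a; rewrite mulr1.
apply: (span_least (L := fun b : R^o => exists c, b = c * r ^+ n.+1)).
  exact: multiples_submod.
move=> _ [x [b [/IH [c ->] /pideal_multiple [d ->] ->]]].
by exists (c * d); rewrite exprSr mulrACA.
Qed.

Lemma smul_gen (M : lmodType R) (I : R^o -> Prop) (K : M -> Prop) a k :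
  I a -> K k -> ideal_smul I K (a *: k).
Proof. by move=> Ia Kk; apply: span_gen; exists a, k. Qed.

Lemma smul_multiples_le (M : lmodType R) (I : R^o -> Prop) (a : R)
    (K S : M -> Prop) :
  (forall b, I b -> exists c, b = c * a) -> submodule S ->
  (forall k, K k -> S (a *: k)) -> forall x, ideal_smul I K x -> S x.
Proof.
move=> HI HS HaK x; apply: span_least => // _ [b [k [/HI [c ->] Kk ->]]].
by rewrite -scalerA; apply: submodZ => //; apply: HaK.
Qed.
End Ideals.

Theorem theorem2p4 (G : groupType) (R : comPzRingType) (M : lmodType R)
  (RG : G -> R -> Prop) (MG : G -> M -> Prop)
  (HR : graded_ring RG) (HM : graded_module RG MG)
  (U : M -> Prop) (HU : graded_submodule MG U) (HUp : proper_submod U) :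
  gr_weakly_Jgr_semiprime RG MG U <->
  (forall (K : M -> Prop) (r : R) (n : nat),
     graded_submodule MG K -> homogeneous RG r -> (0 < n)%N ->
     ~ (forall x, ideal_smul (ideal_pow (pideal r) n) K x <-> x = 0) ->
     (forall x, ideal_smul (ideal_pow (pideal r) n) K x -> U x) ->
     (forall x, ideal_smul (pideal r) K x -> subsum U (Jgr MG) x)).
Proof.
have HUJ := subsum_submod (proj1 HU) (Jgr_submod MG).
split=> [[_ _ Hsemi] K r n [_ HKdec] [g Hr] Hn _ HrnK | Hideal].
  (* <r>K lies in U + J_gr(M) once r k does for every homogeneous k in K. *)
  apply: (smul_multiples_le (@pideal_multiple R r)) => // k /HKdec.
  move=> [s [f [_ Hf ->]]]; rewrite scaler_sumr; apply: submod_sum => // h /Hf.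
  move=> [Hfh Kfh]; have [Hz | Hnz] := eqVneq (r ^+ n *: f h) 0.
    exists 0, (r *: f h); rewrite add0r; split=> //; first exact: submod0 (proj1 HU).
    exact: (Jgr_of_power_annihilated HR HM Hr Hfh Hz).
  apply: Hsemi Hnz _ => //; [by exists g | by exists h |].
  by apply: HrnK; apply: smul_gen => //; apply: pideal_pow_mem.
(* Conversely, test the hypothesis on the graded cyclic submodule Rm = 0 + Rm. *)
split=> // r m n Hr [h Hm] Hn Hnz HUm.
have Km : add_line (fun y : M => y = 0) m m by exists 0, 1; rewrite scale1r add0r.
apply: (Hideal _ r n (add_line_graded HR HM (zero_graded MG) Hm) Hr Hn); last first.
- by apply: smul_gen => //; apply: pideal_mem.
- apply: (smul_multiples_le (@pideal_pow_multiple R r n)) (proj1 HU) _.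
  move=> _ [_ [c [-> ->]]]; rewrite add0r scalerA mulrC -scalerA.
  exact: submodZ (proj1 HU) HUm.
- move=> Hall; move/eqP: Hnz; apply; apply/Hall.
  by apply: smul_gen => //; apply: pideal_pow_mem.
Qed.
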